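(* Let $k\ge2$ be the cache size, let $1\le r\le k-1$ and $N=k+r$, with the pages being the vertices $1,2,\dots,N$ of the cycle $C_N$ in cyclic order. Let $x=\lfloor\log_2\frac Nr\rfloor$ and $X_r=r(x-1)+\lceil N/2^x\rceil$. For $n\ge1$ let $I_n=\langle 1,2,\dots,N\rangle^n$ (the sequence $1,2,\dots,N$ repeated $n$ times). When FAR (with respect to $C_N$) serves $I_n$, each $k$-phase except the first and possibly the last contains exactly $X_r$ faults, and \[\left\lfloor\frac{nN}{k}\right\rfloor X_r+k-X_r\le\mathrm{FAR}(I_n)\le\left\lfloor\frac{nN}{k}\right\rfloor X_r+k-1.\]
   Context: Paging: a cache holds at most $k$ pages and is initially empty. A request to a page in the cache is a hit; otherwise it is a fault, the page is brought into the cache, evicting a page first if the cache is full. $\mathrm{FAR}(I)$ is the number of faults of FAR on $I$. FAR (relative to the access graph): each requested page is marked; on a fault with a full cache, if all cached pages are marked it first unmarks all pages; it then evicts the unmarked cached page whose graph distance to the nearest marked page is largest, ties broken by evicting the least recently requested. $k$-phases: a request sequence is divided recursively: phase 0 is empty (and is ignored), and for $i\ge1$ phase $i$ is a maximal sequence following phase $i-1$ containing at most $k$ distinct pages. *)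

From mathcomp Require Import all_boot.
Set Implicit Arguments. Unset Strict Implicit. Unset Printing Implicit Defensive.

(* Pages are the natural numbers 1..N, the vertices of the cycle C_N in
   cyclic order (i adjacent to i+1, and N adjacent to 1). *)

Definition cdist (N a b : nat) : nat :=
  let d := if a <= b then b - a else a - b in minn d (N - d).

(* distance from q to the nearest page of M (M is nonempty whenever used) *)
Definition dist_to (N : nat) (M : seq nat) (q : nat) : nat :=
  foldr (fun m acc => minn (cdist N q m) acc) N M.

(* time since the last request of q in history hist (larger = less recent) *)
Definition age (hist : seq nat) (q : nat) : nat := index q (rev hist).

(* a is a better eviction candidate than b: farther from the marked pages,
   ties broken in favour of the least recently requested page *)
Definition better (N : nat) (hist M : seq nat) (a b : nat) : bool :=
  (dist_to N M b < dist_to N M a) ||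
  ((dist_to N M a == dist_to N M b) && (age hist b < age hist a)).

Definition victim (N : nat) (hist M : seq nat) (cands : seq nat) : nat :=
  foldl (fun best q => if better N hist M q best then q else best)
        (head 0 cands) (behead cands).

(* FAR run: returns, for each request, whether it is a fault.
   hist = requests served so far, cache = cached pages, marks = marked pages *)
Fixpoint far_run (k N : nat) (hist cache marks : seq nat) (s : seq nat)
  : seq bool :=
  match s with
  | [::] => [::]
  | p :: s' =>
    if p \in cache then
      false :: far_run k N (rcons hist p) cache (p :: marks) s'
    else if size cache < k then
      true :: far_run k N (rcons hist p) (p :: cache) (p :: marks) s'
    else
      let marks1 := if all (fun q => q \in marks) cache then [::] else marks in
      let marks2 := p :: marks1 in
      let cands := [seq q <- cache | q \notin marks2] in
      let v := victim N hist marks2 cands in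
      true :: far_run k N (rcons hist p) (p :: rem v cache) marks2 s'
  end.

Definition far_faults (k N : nat) (I : seq nat) : seq bool :=
  far_run k N [::] [::] [::] I.

Definition FAR (k N : nat) (I : seq nat) : nat := count id (far_faults k N I).

Definition phase_len (k : nat) (s : seq nat) : nat :=
  find (fun i => k < size (undup (take i.+1 s))) (iota 0 (size s)).

Fixpoint phase_sizes_aux (fuel k : nat) (s : seq nat) : seq nat :=
  match fuel with
  | 0 => [::]
  | f.+1 => if s is [::] then [::]
            else phase_len k s :: phase_sizes_aux f k (drop (phase_len k s) s)
  end.

(* lengths of the k-phases 1, 2, ... of s (phase 0 is empty and ignored) *)
Definition phase_sizes (k : nat) (s : seq nat) : seq nat :=
  phase_sizes_aux (size s) k s.

Definition far_phase_faults (k N : nat) (I : seq nat) : seq (seq bool) :=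
  reshape (phase_sizes k I) (far_faults k N I).

Definition cycI (N n : nat) : seq nat := flatten (nseq n (iota 1 N)).

Definition xlog (N r : nat) : nat := trunc_log 2 (N %/ r).
Definition Xr (N r : nat) : nat :=
  let x := xlog N r in r * (x - 1) + (N + 2 ^ x).-1 %/ 2 ^ x.

From mathcomp Require Import all_boot zify.
Set Implicit Arguments. Unset Strict Implicit. Unset Printing Implicit Defensive.

(* In I_n every k-phase consists of k consecutive pages of the cycle, and at
   the start of every phase but the first the cache misses exactly the r pages
   requested first in that phase.  Since FAR evicts the unmarked page farthest
   from the marked arc, each fault on this block of r missing pages moves one
   hole to the middle of the unmarked arc: while the unmarked arc has d >= 2 r
   pages, r faults shrink it to ceil(d / 2), and once d < 2 r the remaining
   d - r faults occur one by one.  Hence every full phase after the first costs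
   r (x - 1) + ceil(N / 2^x) = X_r faults, the first costs k, and a final
   partial phase fewer than X_r. *)

Lemma iotaSr m n : iota m n.+1 = rcons (iota m n) (m + n).
Proof. by rewrite -addn1 iotaD cats1. Qed.

Lemma count_map_iotaS (f : nat -> bool) m n :
  count id (map f (iota m n.+1)) = count id (map f (iota m n)) + f (m + n).
Proof. by rewrite iotaSr map_rcons -cats1 count_cat /= addn0; case: (f _). Qed.

Section FoldBest.
Variables (T : eqType) (better : rel T).
Hypotheses (better_irr : irreflexive better) (better_trans : transitive better).

Local Notation fold_best := (foldl (fun best q => if better q best then q else best)).

Lemma fold_best_mem b s : fold_best b s \in b :: s.
Proof.
elim: s b => [|x s IH] b /=; first exact: mem_head.
by case: ifP => _; [have := IH x | have := IH b];
  rewrite !inE => /orP [->|->]; rewrite ?orbT.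
Qed.

Lemma fold_best_max P b s : {in P, forall q, ~~ better q b} ->
  {in P ++ b :: s, forall q, ~~ better q (fold_best b s)}.
Proof.
elim: s b P => [|x s IH] b P HP /=.
  by move=> q; rewrite cats1 mem_rcons inE => /orP [/eqP ->|/HP //]; rewrite better_irr.
case: ifP => hxb.
  rewrite -cat_rcons; apply: IH => q; rewrite mem_rcons inE => /orP [/eqP ->|hq].
    by apply/negP => hbx; have := better_irr x; rewrite (better_trans hxb hbx).
  by apply/negP => hqx; have := HP q hq; rewrite (better_trans hqx hxb).
move=> q hq; apply: (IH b (rcons P x)); last first.
  move: hq; rewrite !mem_cat !inE mem_rcons inE.
  by case: (q \in P); case: (q == b); case: (q == x).
by move=> y; rewrite mem_rcons inE => /orP [/eqP ->|/HP //]; rewrite hxb.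
Qed.

Lemma fold_best_eq b s w : w \in b :: s ->
  (forall q, q \in b :: s -> q != w -> better w q) -> fold_best b s = w.
Proof.
move=> hw H; have hv := fold_best_mem b s.
case: (eqVneq (fold_best b s) w) => // hvw.
have nil_max : {in [::], forall q, ~~ better q b} by [].
by have := fold_best_max nil_max hw; rewrite H.
Qed.

End FoldBest.

Section CycleDistance.
Variable N : nat.

Lemma cdist_sym a b : cdist N a b = cdist N b a.
Proof. by rewrite /cdist; case: ifP; case: ifP; lia. Qed.

Lemma dist_to_le M q x : x \in M -> dist_to N M q <= cdist N q x.
Proof. by elim: M => [|y M IH] //=; rewrite inE => /orP [/eqP ->|/IH]; lia. Qed.

Lemma dist_to_ge M q L : L <= N -> {in M, forall x, L <= cdist N q x} ->
  L <= dist_to N M q.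
Proof.
move=> hL; elim: M => [|y M IH] H //=.
have := H y (mem_head _ _).
have : L <= dist_to N M q by apply: IH => x hx; apply: H; rewrite inE hx orbT.
lia.
Qed.

Lemma victim_eq h M cands w : w \in cands ->
  (forall q, q \in cands -> q != w -> better N h M w q) -> victim N h M cands = w.
Proof.
case: cands => [//|c cs] hw H; apply: fold_best_eq => //.
  by move=> x; apply/negbTE; rewrite /better; lia.
by move=> y x z; rewrite /better; lia.
Qed.

End CycleDistance.

(* ceil (m / 2 ^ t), for 0 < m *)
Definition ceil_div2n m t := (m.-1 %/ 2 ^ t).+1.

Lemma ceil_div2n0 m : 0 < m -> ceil_div2n m 0 = m.
Proof. by rewrite /ceil_div2n expn0 divn1; lia. Qed.

Lemma ceil_div2nS m t : ceil_div2n m t.+1 = (ceil_div2n m t + 1) %/ 2.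
Proof. by rewrite /ceil_div2n expnSr divnMA; lia. Qed.

Lemma ceil_div2n_ge m t : m <= ceil_div2n m t * 2 ^ t.
Proof. by have := @ltn_ceil m.-1 (2 ^ t) (expn_gt0 _ _); rewrite /ceil_div2n; lia. Qed.

Lemma ceil_div2nE m t : 0 < m -> (m + 2 ^ t).-1 %/ 2 ^ t = ceil_div2n m t.
Proof.
move=> m_gt0; rewrite (_ : (m + 2 ^ t).-1 = m.-1 + 1 * 2 ^ t); last by lia.
by rewrite divnDMl ?expn_gt0 // addn1.
Qed.

Lemma ceil_div2n_le m t c : m.-1 < c * 2 ^ t -> ceil_div2n m t <= c.
Proof. by rewrite /ceil_div2n -ltn_divLR ?expn_gt0. Qed.

Section ArcFaults.
Variable r : nat.
Hypothesis r_gt0 : 0 < r.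

(* Faults still to come in a phase once the unmarked arc has d pages, the
   first r of them missing from the cache.  The fuel [d] suffices since
   (d + 1) / 2 < d whenever 2 r <= d. *)
Fixpoint arc_faults_rec fuel d :=
  if fuel is f.+1 then
    if 2 * r <= d then r + arc_faults_rec f ((d + 1) %/ 2) else d - r
  else 0.

Definition arc_faults d := arc_faults_rec d d.

Lemma arc_faults_rec_enough f1 f2 d : d <= f1 -> d <= f2 ->
  arc_faults_rec f1 d = arc_faults_rec f2 d.
Proof.
elim: f1 f2 d => [|f1 IH] [|f2] d h1 h2 //=.
- by case: ifP; lia.
- by case: ifP; lia.
- by case: ifP => // h; congr (_ + _); apply: IH; lia.
Qed.

Lemma arc_faultsE d :
  arc_faults d = if 2 * r <= d then r + arc_faults ((d + 1) %/ 2) else d - r.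
Proof.
rewrite /arc_faults; case: d => [|d] /=; first by case: ifP; lia.
by case: ifP => // h; congr (_ + _); apply: arc_faults_rec_enough; lia.
Qed.

Lemma arc_faults_small d : d < 2 * r -> arc_faults d = d - r.
Proof. by rewrite arc_faultsE; case: ifP => //; lia. Qed.

Lemma arc_faults_gt0 d : r < d -> 0 < arc_faults d.
Proof. by rewrite arc_faultsE; case: ifP; lia. Qed.

Lemma arc_faults_iter m t : 0 < m -> (forall s, s < t -> 2 * r <= ceil_div2n m s) ->
  arc_faults m = r * t + arc_faults (ceil_div2n m t).
Proof.
move=> m_gt0; elim: t => [|t IH] H; first by rewrite muln0 ceil_div2n0.
rewrite IH => [|s hs]; last exact/H/ltnW.
by rewrite (arc_faultsE (ceil_div2n m t)) H // ceil_div2nS mulnSr addnA.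
Qed.

Lemma arc_faults_Xr N : 2 * r <= N -> arc_faults N = Xr N r.
Proof.
move=> hrN; rewrite /Xr /xlog; set x := trunc_log 2 (N %/ r).
have N_gt0 : 0 < N by lia.
have x_gt0 : 0 < x by apply: trunc_log_max => //; rewrite expn1 leq_divRL // mulnC.
have x_lo : 2 ^ x * r <= N by rewrite -leq_divRL //; apply: trunc_logP; rewrite ?divn_gt0 //; lia.
have x_hi : N < 2 ^ x.+1 * r by rewrite -ltn_divLR //; exact: trunc_log_ltn.
rewrite ceil_div2nE // (@arc_faults_iter N x) //; last first.
  move=> s hs; rewrite -(leq_pmul2r (expn_gt0 2 s)); apply: leq_trans (ceil_div2n_ge N s).
  apply: leq_trans x_lo; rewrite mulnC mulnA leq_mul2r -expnSr leq_exp2l //.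
  by rewrite hs orbT.
have hc_hi : ceil_div2n N x <= 2 * r.
  by apply: ceil_div2n_le; rewrite expnSr in x_hi; lia.
have hc_lo : r <= ceil_div2n N x.
  by rewrite -(leq_pmul2r (expn_gt0 2 x)) mulnC; exact: leq_trans x_lo (ceil_div2n_ge N x).
have -> : r * x = r * (x - 1) + r by rewrite -mulnSr; congr (_ * _); lia.
case: (ltnP (ceil_div2n N x) (2 * r)) => hc; first by rewrite arc_faults_small //; lia.
have -> : ceil_div2n N x = 2 * r by lia.
rewrite arc_faultsE leqnn (_ : (2 * r + 1) %/ 2 = r); last by lia.
by rewrite arc_faults_small; lia.
Qed.

End ArcFaults.

Section Chunks.
Variable k : nat.

Definition chunk_sizes L :=
  nseq (L %/ k) k ++ (if L %% k == 0 then [::] else [:: L %% k]).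

Lemma size_chunk_sizes L : size (chunk_sizes L) = L %/ k + (L %% k != 0).
Proof. by rewrite /chunk_sizes size_cat size_nseq; case: eqP. Qed.

Lemma nth_reshape_chunk (T : Type) L (s : seq T) j : j < L %/ k ->
  nth [::] (reshape (chunk_sizes L) s) j = take k (drop (j * k) s).
Proof.
move=> hj; rewrite nth_reshape /chunk_sizes nth_cat take_cat size_nseq hj.
by rewrite nth_nseq hj take_nseq ?sumn_nseq 1?mulnC // ltnW.
Qed.

End Chunks.

Section FarOnCycle.
Variables k r : nat.
Hypothesis r_gt0 : 0 < r.
Hypothesis r_lt_k : r < k.
Local Notation N := (k + r).

Local Notation state := (seq nat * seq nat * seq nat)%type.
Local Notation hist_of st := st.1.1 (only parsing).
Local Notation cache_of st := st.1.2 (only parsing).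
Local Notation marks_of st := st.2 (only parsing).

Definition far_step (st : state) (p : nat) : bool * state :=
  let: (h, c, m) := st in
  if p \in c then (false, (rcons h p, c, p :: m))
  else if size c < k then (true, (rcons h p, p :: c, p :: m))
  else
    let m' := p :: (if all (fun q => q \in m) c then [::] else m) in
    (true, (rcons h p, p :: rem (victim N h m' [seq q <- c | q \notin m']) c, m')).

Definition far_run_from (st : state) s :=
  far_run k N (hist_of st) (cache_of st) (marks_of st) s.

Lemma far_run_from_cons st p s :
  far_run_from st (p :: s) = (far_step st p).1 :: far_run_from (far_step st p).2 s.
Proof. by case: st => [[h c] m]; rewrite /far_run_from /=; case: ifP => //; case: ifP. Qed.

(* the t-th request (counting from 0) of <1, ..., N>^oo *)
Definition req t := t %% N + 1.

Fixpoint state_at t : state :=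
  if t is t'.+1 then (far_step (state_at t') (req t')).2 else ([::], [::], [::]).

Definition fault_at t := (far_step (state_at t) (req t)).1.

Lemma far_run_state_at t L :
  far_run_from (state_at t) (map req (iota t L)) = map fault_at (iota t L).
Proof. by elim: L t => [|L IH] t //=; rewrite far_run_from_cons -IH. Qed.

Lemma hist_state_at t : hist_of (state_at t) = map req (iota 0 t).
Proof.
elim: t => [//|t IH]; rewrite iotaSr map_rcons /=.
by move: IH; case: (state_at t) => [[h c] m] /= ->; case: ifP => _ //; case: ifP.
Qed.

Lemma req_small t : t < N -> req t = t.+1.
Proof. by move=> h; rewrite /req modn_small // addn1. Qed.

Lemma req_periodic t : req (t + N) = req t.
Proof. by rewrite /req modnDr. Qed.

Lemma req_range t : 0 < req t <= N.
Proof. by rewrite /req; have := ltn_pmod t (_ : 0 < N); lia. Qed.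

Lemma req_inj T u v : u < N -> v < N -> req (T + u) = req (T + v) -> u = v.
Proof.
move=> hu hv; rewrite /req => /addIn /eqP.
by rewrite -/(_ == _ %[mod N]) eqn_modDl !modn_small // => /eqP.
Qed.

Lemma req_eq T u v : u < N -> v < N -> (req (T + u) == req (T + v)) = (u == v).
Proof. by move=> hu hv; apply/eqP/eqP => [|->] //; exact: req_inj. Qed.

Lemma req_surj T q : 0 < q <= N -> exists2 u, u < N & q = req (T + u).
Proof.
move=> hq; exists ((q.-1 + N - T %% N) %% N); first by rewrite ltn_mod; lia.
have hT : T %% N < N by rewrite ltn_mod; lia.
rewrite /req modnDmr (_ : T + _ = T %/ N * N + (q.-1 + N)); last first.
  by rewrite {1}(divn_eq T N); lia.
by rewrite modnMDl modnDr modn_small; lia.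
Qed.

Lemma cdist_req x d : d < N -> cdist N (req x) (req (x + d)) = minn d (N - d).
Proof.
move=> hd; have hx : x %% N < N by rewrite ltn_mod; lia.
rewrite /req -(modnDml x d N) /cdist.
case: (ltnP (x %% N + d) N) => h.
  by rewrite (modn_small h); case: ifP; lia.
rewrite (_ : x %% N + d = (x %% N + d - N) + N); last by lia.
by rewrite modnDr (@modn_small (_ - N)); [case: ifP|]; lia.
Qed.

Lemma age_req t w : w < N ->
  age (map req (iota 0 t)) (req (t + w)) = minn t (N - 1 - w).
Proof.
rewrite /age; elim: t w => [|t IH] w hw; first by rewrite /= min0n.
rewrite iotaSr map_rcons rev_rcons /= add0n.
case: (ltnP w.+1 N) => hw1.
  have -> : t.+1 + w = t + w.+1 by lia.
  have N_gt0 : 0 < N by lia.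
  by have := req_eq t N_gt0 hw1; rewrite addn0 => ->; rewrite /= IH //; lia.
by rewrite (_ : t.+1 + w = t + N); [rewrite req_periodic eqxx; lia | lia].
Qed.

Lemma state_at_cold t : t <= k ->
  state_at t = (iota 1 t, rev (iota 1 t), rev (iota 1 t)).
Proof.
elim: t => [//|t IH] ht; rewrite [LHS]/= IH 1?ltnW // req_small; last by lia.
rewrite /far_step (_ : t.+1 \in rev (iota 1 t) = false); last by rewrite mem_rev mem_iota; lia.
by rewrite size_rev size_iota ht iotaSr rev_rcons add1n.
Qed.

Lemma fault_at_cold t : t < k -> fault_at t.
Proof.
move=> ht; rewrite /fault_at state_at_cold 1?ltnW // req_small; last by lia.
by rewrite /= mem_rev mem_iota ltnn andbF size_rev size_iota ht.
Qed.

Lemma count_fault_first_phase : count id (map fault_at (iota 0 k)) = k.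
Proof.
rewrite count_map (@eq_in_count _ _ predT) ?count_predT ?size_iota //.
by move=> x; rewrite mem_iota => /fault_at_cold.
Qed.

Definition phase_prefix T i := [seq req (T + u) | u <- iota 0 i].

Lemma mem_phase_prefix T i u : i <= N -> u < N -> (req (T + u) \in phase_prefix T i) = (u < i).
Proof.
move=> hi hu; apply/mapP/idP => [[v]|hui].
  by rewrite mem_iota => hv /req_inj -> //; lia.
by exists u => //; rewrite mem_iota.
Qed.

Lemma dist_to_prefix T i (M : seq nat) x : M =i phase_prefix T i.+1 -> i < x < N ->
  dist_to N M (req (T + x)) = minn (x - i) (N - x).
Proof.
move=> HM hx; have cdist_prefix v : v <= i ->
    cdist N (req (T + x)) (req (T + v)) = minn (x - v) (N - (x - v)).
  by move=> hv; rewrite cdist_sym (_ : T + x = T + v + (x - v)) ?cdist_req //; lia.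
apply/eqP; rewrite eqn_leq; apply/andP; split.
  have Mi : req (T + i) \in M by rewrite HM mem_phase_prefix //; lia.
  have M0 : req (T + 0) \in M by rewrite HM mem_phase_prefix //; lia.
  have := dist_to_le N (req (T + x)) Mi; have := dist_to_le N (req (T + x)) M0.
  by rewrite !cdist_prefix //; lia.
apply: dist_to_ge => [|y]; first by lia.
by rewrite HM => /mapP [v]; rewrite mem_iota => hv ->; rewrite cdist_prefix; lia.
Qed.

Definition mid a := (N + a) %/ 2.

(* Within a phase starting at time T, offset u stands for page req (T + u).
   The cache misses exactly the offsets with [hole a jj]: the rest [a + jj,
   a + r) of a block of r consecutive holes, and the jj holes at the middle of
   the unmarked arc [a, N) that FAR has created while faulting on the block. *)
Definition hole a jj u := (a + jj <= u < a + r) || (mid a <= u < mid a + jj).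

Definition config_ok i a jj :=
  ((jj == 0) && [&& i <= a, a + r <= N & (i < a) ==> (a + r < N)]) ||
  [&& 0 < jj, jj < r, i == a + jj & a + 2 * r <= N].

Definition faults_left a jj :=
  if jj == 0 then arc_faults r (N - a) else r - jj + arc_faults r (N - mid a).

Definition evictee a jj := if (jj == 0) && (N - a < 2 * r) then a + r else mid a + jj.

Definition next_config a jj : nat * nat :=
  if (jj == 0) && (N - a < 2 * r) then (a + 1, 0)
  else if jj.+1 == r then (mid a, 0) else (a, jj.+1).

Section PhaseStep.
Variables i a jj : nat.
Hypothesis cfg : config_ok i a jj.
Hypothesis i_lt_k : i < k.

Lemma config_ok_hit : ~~ hole a jj i -> config_ok i.+1 a jj.
Proof. by move: cfg; rewrite /config_ok /hole /mid; lia. Qed.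

Hypothesis i_hole : hole a jj i.

Lemma evictee_ok : i < evictee a jj < N /\ ~~ hole a jj (evictee a jj).
Proof. by move: cfg i_hole; rewrite /config_ok /hole /evictee /mid; case: ifP; lia. Qed.

Lemma config_ok_fault : config_ok i.+1 (next_config a jj).1 (next_config a jj).2.
Proof.
move: cfg i_hole; rewrite /config_ok /hole /next_config /mid.
by case: ifP => h1; [|case: ifP => h2]; rewrite /=; lia.
Qed.

Lemma hole_next_config u : u < N ->
  ~~ hole (next_config a jj).1 (next_config a jj).2 u =
  (u == i) || ((u != evictee a jj) && ~~ hole a jj u).
Proof.
move=> hu; move: cfg i_hole; rewrite /config_ok /hole /next_config /evictee /mid.
by case: ifP => h1; [|case: ifP => h2]; rewrite /=; lia.
Qed.

Lemma faults_left_fault :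
  faults_left a jj = (faults_left (next_config a jj).1 (next_config a jj).2).+1.
Proof.
have mid_arc : N - mid a = (N - a + 1) %/ 2 by move: cfg; rewrite /config_ok /mid; lia.
move: cfg i_hole; rewrite /config_ok /hole /next_config /faults_left.
case: (eqVneq jj 0) => [->|jj_gt0] /= G H.
  case: (ltnP (N - a) (2 * r)) => hd /=.
    by rewrite !arc_faults_small //; lia.
  rewrite (arc_faultsE r_gt0 (N - a)) ifT // -mid_arc.
  by case: (eqVneq 1 r) => /=; lia.
by case: (eqVneq jj.+1 r) => /=; lia.
Qed.

(* [minn (u - i) (N - u)] is the distance from offset u to the marked arc
   [0, i] and [minn t (N - 1 - (u - i))] its age, the keys of [better]. *)
Lemma evictee_farthest t u : k + i <= t -> i < u < N -> ~~ hole a jj u ->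
  u != evictee a jj ->
  let e := evictee a jj in
  minn (u - i) (N - u) < minn (e - i) (N - e) \/
  (minn (u - i) (N - u) = minn (e - i) (N - e) /\
   minn t (N - 1 - (u - i)) < minn t (N - 1 - (e - i))).
Proof.
move=> ht hu hnu hue /=.
have mid_half : N + a = mid a + mid a \/ N + a = mid a + mid a + 1 by rewrite /mid; lia.
move: cfg i_hole hnu hue; rewrite /config_ok /hole /evictee.
move: mid_half; set m := mid a; clearbody m => mid_half G H hnu hue.
case: (eqVneq jj 0) => [hj|hj]; last first.
  by left; move: hue; rewrite (negbTE hj) /=; lia.
subst jj; have ia : i = a by lia.
rewrite ia; have a_u : a + r <= u < N by lia.
move: hue; case: (ltnP (N - a) (2 * r)) => /= hd hue.
  by left; clear -a_u hd hue; lia.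
have a2r : a + 2 * r <= N by lia.
case: mid_half => Em; first by left; clear -a_u hue Em; lia.
have [->|hu1] := eqVneq u m.+1; last by left; clear -a_u hue hu1 Em; lia.
have age_m : N - 1 - (m - a) <= t by clear -Em a2r ht ia; lia.
by right; split; clear -r_gt0 Em a2r age_m; lia.
Qed.

End PhaseStep.

Record phase_state T i a jj : Prop := PhaseState {
  phase_config : config_ok i a jj;
  phase_cache_uniq : uniq (cache_of (state_at (T + i)));
  phase_cache_size : size (cache_of (state_at (T + i))) = k;
  phase_cache_range : {in cache_of (state_at (T + i)), forall q, 0 < q <= N};
  phase_cache : forall u, u < N ->
    (req (T + u) \in cache_of (state_at (T + i))) = ~~ hole a jj u;
  phase_marks :
    (i = 0 /\ a = 0 /\ jj = 0 /\
     all (fun q => q \in marks_of (state_at (T + i))) (cache_of (state_at (T + i)))) \/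
    (0 < i /\ marks_of (state_at (T + i)) =i phase_prefix T i);
  phase_count : count id (map fault_at (iota T i)) + faults_left a jj = arc_faults r N
}.

Lemma victim_in_phase T i a jj (c m : seq nat) :
  k <= T -> i < k -> config_ok i a jj -> hole a jj i ->
  {in c, forall q, 0 < q <= N} ->
  (forall u, u < N -> (req (T + u) \in c) = ~~ hole a jj u) ->
  m =i phase_prefix T i.+1 ->
  victim N (map req (iota 0 (T + i))) m [seq q <- c | q \notin m] =
  req (T + evictee a jj).
Proof.
move=> hT hik hg hhi hR hM hm.
have [/andP [e_gt_i e_lt_N] e_hole] := evictee_ok hg hik hhi.
have marked u : u < N -> (req (T + u) \in m) = (u <= i).
  by move=> hu; rewrite hm mem_phase_prefix //; lia.
have age_phase u : i <= u < N ->
    age (map req (iota 0 (T + i))) (req (T + u)) = minn (T + i) (N - 1 - (u - i)).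
  by move=> hu; rewrite (_ : T + u = T + i + (u - i)) ?age_req; lia.
apply: victim_eq; first by rewrite mem_filter marked // -ltnNge e_gt_i hM.
move=> q; rewrite mem_filter => /andP [qm qc].
have [u hu qu] := req_surj T (hR q qc); subst q.
move: qm; rewrite marked // -ltnNge req_eq // => ui ue.
have u_hole : ~~ hole a jj u by rewrite -hM.
have iu : i < u < N by rewrite ui.
have ie : i < evictee a jj < N by rewrite e_gt_i.
have kiT : k + i <= T + i by rewrite leq_add2r.
have /= farthest := evictee_farthest hg hik hhi kiT iu u_hole ue.
rewrite /better (dist_to_prefix hm iu) (dist_to_prefix hm ie).
rewrite !age_phase; [|by rewrite ltnW|by rewrite ltnW].
by case: farthest => [-> //|[-> ->]]; rewrite eqxx orbT.
Qed.

Lemma phase_state_hit T i a jj : i < k -> ~~ hole a jj i ->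
  phase_state T i a jj -> phase_state T i.+1 a jj.
Proof.
move=> hik hhi [hg hU hS hR hM hK hC].
have Est : state_at (T + i.+1) = (far_step (state_at (T + i)) (req (T + i))).2.
  by rewrite addnS.
have Ef : fault_at (T + i) = (far_step (state_at (T + i)) (req (T + i))).1 by [].
move: Est Ef hU hS hR hM hK.
case: (state_at (T + i)) => [[h c] m] /= Est Ef hU hS hR hM hK.
have pc : req (T + i) \in c by rewrite hM ?hhi //; lia.
rewrite pc in Est Ef.
constructor; rewrite ?Est //.
- exact: config_ok_hit.
- right; split => // q; case: hK => [[i0 [a0 [jj0 _]]]|[_ hmi]].
    by move: hhi; rewrite i0 a0 jj0 /hole; lia.
  by rewrite inE hmi /phase_prefix iotaSr map_rcons mem_rcons inE add0n.
- by rewrite count_map_iotaS Ef addn0.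
Qed.

Lemma phase_state_fault T i a jj : k <= T -> i < k -> hole a jj i ->
  phase_state T i a jj ->
  phase_state T i.+1 (next_config a jj).1 (next_config a jj).2.
Proof.
move=> hT hik hhi [hg hU hS hR hM hK hC].
have [/andP [e_gt_i e_lt_N] e_hole] := evictee_ok hg hik hhi.
have Est : state_at (T + i.+1) = (far_step (state_at (T + i)) (req (T + i))).2.
  by rewrite addnS.
have Ef : fault_at (T + i) = (far_step (state_at (T + i)) (req (T + i))).1 by [].
have Eh := hist_state_at (T + i).
move: Est Ef hU hS hR hM hK Eh.
case: (state_at (T + i)) => [[h c] m] /= Est Ef hU hS hR hM hK Eh.
have iN : i < N by rewrite ltn_addr.
have pc : req (T + i) \notin c by rewrite hM ?hhi.
have ec : req (T + evictee a jj) \in c by rewrite hM.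
set m' := req (T + i) :: (if all (fun q => q \in m) c then [::] else m).
(* The evictee is cached but unmarked, so the marks are reset only when i = 0. *)
have Hm' : m' =i phase_prefix T i.+1.
  move=> q; rewrite /phase_prefix iotaSr map_rcons mem_rcons !inE add0n.
  congr (_ || _); case: hK => [[-> [_ [_ ->]]] //|[_ hmi]].
  rewrite (_ : all _ c = false) //; apply/negbTE/allP => /(_ _ ec).
  by rewrite hmi mem_phase_prefix ?(ltnW iN) // ltnNge (ltnW e_gt_i).
have hv : victim N h m' [seq q <- c | q \notin m'] = req (T + evictee a jj).
  by rewrite Eh; apply: victim_in_phase.
have Est' : state_at (T + i.+1) =
    (rcons h (req (T + i)), req (T + i) :: rem (req (T + evictee a jj)) c, m').
  by rewrite Est (negbTE pc) hS ltnn -hv.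
have Ef' : fault_at (T + i) by rewrite Ef (negbTE pc) hS ltnn.
constructor; rewrite ?Est'.
- exact: config_ok_fault.
- by rewrite /= rem_uniq // andbT; apply: contra pc => /mem_rem.
- by rewrite /= size_rem // hS prednK // (ltn_trans r_gt0 r_lt_k).
- by move=> q; rewrite /= inE => /orP [/eqP ->|/mem_rem /hR //]; exact: req_range.
- move=> u hu; rewrite /= inE (mem_rem_uniq _ hU) inE /= !req_eq // hM //.
  by rewrite (hole_next_config hg hik hhi hu).
- by right; split.
- rewrite count_map_iotaS Ef'; have := faults_left_fault hg hik hhi.
  by clear -hC; lia.
Qed.

Lemma phase_state_prefix T L : k <= T -> phase_state T 0 0 0 -> L <= k ->
  exists a jj, phase_state T L a jj.
Proof.
move=> hT h0; elim: L => [|L IH] hL; first by exists 0, 0.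
have [a [jj hs]] := IH (ltnW hL).
case hhi: (hole a jj L).
  by exists (next_config a jj).1, (next_config a jj).2; apply: phase_state_fault.
by exists a, jj; apply: phase_state_hit; rewrite ?hhi.
Qed.

Lemma phase_state_start : phase_state k 0 0 0.
Proof.
have E := state_at_cold (leqnn k).
constructor; rewrite ?addn0 ?E /=.
- by rewrite /config_ok; lia.
- by rewrite rev_uniq iota_uniq.
- by rewrite size_rev size_iota.
- by move=> q; rewrite mem_rev mem_iota; lia.
- move=> u hu; rewrite mem_rev mem_iota /hole.
  have [ur|ru] := ltnP u r; first by rewrite req_small; lia.
  by rewrite (_ : k + u = u - r + N) ?req_periodic ?req_small; lia.
- by left; do 3 split => //; apply/allP.
- by rewrite /faults_left /= subn0.
Qed.

Lemma phase_state_end T a jj : phase_state T k a jj -> a = k /\ jj = 0.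
Proof. by case=> hg _ _ _ _ _ _; move: hg; rewrite /config_ok; lia. Qed.

Lemma count_fault_phase_state T a jj : phase_state T k a jj ->
  count id (map fault_at (iota T k)) = arc_faults r N.
Proof.
move=> hs; have [ak jj0] := phase_state_end hs; subst a jj.
by case: hs => _ _ _ _ _ _; rewrite /faults_left /= addKn arc_faults_small; lia.
Qed.

Lemma phase_state_next T a jj : phase_state T k a jj -> phase_state (T + k) 0 0 0.
Proof.
move=> hs; have [ak jj0] := phase_state_end hs; subst a jj.
case: hs => _ hU hS hR hM hK _.
have cached u : u < N -> (req (T + u) \in cache_of (state_at (T + k))) = (u < k).
  by move=> hu; rewrite hM // /hole; lia.
have marked : marks_of (state_at (T + k)) =i phase_prefix T k.
  by case: hK => [[k0 _]|[_ //]]; lia.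
constructor; rewrite ?addn0 //.
- by rewrite /config_ok; lia.
- move=> u hu; rewrite /hole.
  have [ur|ru] := ltnP u r; first by rewrite -addnA cached; lia.
  by rewrite (_ : T + k + u = T + (u - r) + N) ?req_periodic ?cached; lia.
- left; do 3 split => //; apply/allP => q qc; rewrite marked.
  have [v hv qv] := req_surj T (hR q qc).
  by move: qc; rewrite qv cached // => vk; rewrite mem_phase_prefix //; lia.
- by rewrite /faults_left /= subn0.
Qed.

Lemma phase_state_phase j : phase_state (j.+1 * k) 0 0 0.
Proof.
elim: j => [|j IH]; first by rewrite mul1n; exact: phase_state_start.
have [a [jj hs]] := phase_state_prefix (leq_pmull k (ltn0Sn j)) IH (leqnn k).
by rewrite mulSn addnC; exact: phase_state_next hs.
Qed.

Lemma count_fault_phase j : count id (map fault_at (iota (j.+1 * k) k)) = arc_faults r N.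
Proof.
have [a [jj]] := phase_state_prefix (leq_pmull k (ltn0Sn j)) (phase_state_phase j) (leqnn k).
exact: count_fault_phase_state.
Qed.

Lemma count_fault_partial j L : L < k ->
  count id (map fault_at (iota (j.+1 * k) L)) < arc_faults r N.
Proof.
move=> hL.
have [a [jj [hg _ _ _ _ _ hC]]] :=
  phase_state_prefix (leq_pmull k (ltn0Sn j)) (phase_state_phase j) (ltnW hL).
suff : 0 < faults_left a jj by lia.
move: hg; rewrite /config_ok /faults_left; case: (eqVneq jj 0) => [_|jj_gt0] /= hg.
  by apply: arc_faults_gt0; lia.
by lia.
Qed.

Lemma count_fault_prefix q :
  count id (map fault_at (iota 0 (q.+1 * k))) = k + q * arc_faults r N.
Proof.
elim: q => [|q IH]; first by rewrite mul1n count_fault_first_phase mul0n addn0.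
rewrite mulSn addnC iotaD map_cat count_cat IH add0n count_fault_phase mulSn.
by lia.
Qed.

Lemma count_fault_bounds L : k <= L ->
  L %/ k * arc_faults r N + k <= count id (map fault_at (iota 0 L)) + arc_faults r N /\
  count id (map fault_at (iota 0 L)) + 1 <= L %/ k * arc_faults r N + k.
Proof.
move=> kL; have k_gt0 : 0 < k by lia.
have q_gt0 : 0 < L %/ k by rewrite divn_gt0.
have rm_lt := ltn_pmod L k_gt0.
rewrite [in iota 0 L](divn_eq L k).
case: (L %/ k) q_gt0 => [//|q] _.
rewrite iotaD map_cat count_cat add0n count_fault_prefix.
by have := count_fault_partial q rm_lt; rewrite mulSn; lia.
Qed.

Lemma cycI_req n : cycI N n = map req (iota 0 (n * N)).
Proof.
elim: n => [//|n IH].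
rewrite (_ : cycI N n.+1 = iota 1 N ++ cycI N n) // IH mulSn (iotaD 0 N) map_cat add0n.
congr (_ ++ _).
  rewrite (_ : iota 1 N = map (addn 1) (iota 0 N)); last by rewrite -iotaDl.
  by apply/eq_in_map => u; rewrite mem_iota => hu; rewrite req_small; lia.
rewrite (_ : iota N (n * N) = map (addn N) (iota 0 (n * N))); last first.
  by rewrite -iotaDl addn0.
by rewrite -map_comp; apply: eq_map => u /=; rewrite addnC req_periodic.
Qed.

Lemma far_faults_cycI n : far_faults k N (cycI N n) = map fault_at (iota 0 (n * N)).
Proof. by rewrite cycI_req; exact: (far_run_state_at 0 (n * N)). Qed.

Lemma uniq_req_window t m : m <= N -> uniq (map req (iota t m)).
Proof.
move=> hm; rewrite map_inj_in_uniq ?iota_uniq // => x y; rewrite !mem_iota => hx hy.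
rewrite (_ : x = t + (x - t)) 1?(_ : y = t + (y - t)); try lia.
by move/req_inj => ->; lia.
Qed.

Lemma phase_len_req t L : phase_len k (map req (iota t L)) = minn k L.
Proof.
rewrite /phase_len size_map size_iota.
set P := fun i => _.
have HP i : i <= k -> i < L -> P i = (k <= i).
  move=> hi hiL; rewrite /P -map_take take_iota undup_id; last by apply: uniq_req_window; lia.
  by rewrite size_map size_iota; lia.
rewrite {1}(_ : L = minn k L + (L - minn k L)); last by lia.
rewrite iotaD find_cat size_iota add0n.
have -> : has P (iota 0 (minn k L)) = false.
  by apply/negbTE/hasPn => i; rewrite mem_iota => hi; rewrite HP; lia.
have [hLk|hkL] := leqP L k; first by rewrite subnn addn0.
by rewrite (_ : L - k = (L - k).-1.+1) /= ?HP ?leqnn ?addn0; lia.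
Qed.

Lemma phase_sizes_aux_req fuel t L : L <= fuel ->
  phase_sizes_aux fuel k (map req (iota t L)) = chunk_sizes k L.
Proof.
have k_gt0 : 0 < k by lia.
elim: fuel t L => [|f IH] t [|L] hL; rewrite ?/chunk_sizes ?div0n ?mod0n //.
have E := phase_len_req t L.+1.
rewrite [map req (iota t L.+1)]/= in E *; rewrite [phase_sizes_aux _ _ _]/= E.
change (req t :: _) with (map req (iota t L.+1)); rewrite -map_drop drop_iota.
have [hLk|hkL] := leqP L.+1 k.
  rewrite subnn (_ : phase_sizes_aux f k _ = [::]); last by case: f {IH hL}.
  case: (ltngtP L.+1 k) hLk => // h _; last by rewrite h divnn modnn k_gt0.
  by rewrite divn_small // modn_small.
rewrite IH; last by lia.
have E3 : L.+1 = L.+1 - k + 1 * k by lia.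
rewrite /chunk_sizes (_ : L.+1 %/ k = ((L.+1 - k) %/ k).+1); last first.
  by rewrite {1}E3 divnDMl // addn1.
by rewrite (_ : L.+1 %% k = (L.+1 - k) %% k) // {1}E3 mul1n modnDr.
Qed.

Lemma phase_sizes_cycI n : phase_sizes k (cycI N n) = chunk_sizes k (n * N).
Proof. by rewrite cycI_req /phase_sizes size_map size_iota phase_sizes_aux_req. Qed.

Lemma count_far_phase_faults n j : 0 < j ->
  j < (size (far_phase_faults k N (cycI N n))).-1 ->
  count id (nth [::] (far_phase_faults k N (cycI N n)) j) = Xr N r.
Proof.
rewrite /far_phase_faults phase_sizes_cycI far_faults_cycI size_reshape.
rewrite size_chunk_sizes => j_gt0 hj.
have jq : j < n * N %/ k by lia.
have jkL : j.+1 * k <= n * N by rewrite -leq_divRL //; lia.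
rewrite nth_reshape_chunk // -map_drop -map_take drop_iota take_iota add0n.
rewrite (_ : minn k (n * N - j * k) = k); last by rewrite mulSn in jkL; lia.
case: j j_gt0 {hj jq jkL} => [//|j] _.
by rewrite count_fault_phase arc_faults_Xr //; lia.
Qed.

Lemma FAR_cycI_bounds n : 0 < n ->
  n * N %/ k * Xr N r + k <= FAR k N (cycI N n) + Xr N r /\
  FAR k N (cycI N n) + 1 <= n * N %/ k * Xr N r + k.
Proof.
move=> n_gt0; have <- : arc_faults r N = Xr N r by rewrite arc_faults_Xr //; lia.
rewrite /FAR far_faults_cycI; apply: count_fault_bounds.
by apply: leq_trans (leq_pmull N n_gt0); lia.
Qed.

End FarOnCycle.

Theorem lemma13 (k r n : nat) :
  2 <= k -> 1 <= r <= k - 1 -> 1 <= n ->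
  let N := k + r in
  let X := Xr N r in
  let ph := far_phase_faults k N (cycI N n) in
  (forall j, 0 < j -> j < (size ph).-1 -> count id (nth [::] ph j) = X) /\
  ((n * N) %/ k) * X + k <= FAR k N (cycI N n) + X /\
  FAR k N (cycI N n) + 1 <= ((n * N) %/ k) * X + k.
Proof.
(* 2 <= k already follows from 1 <= r <= k - 1. *)
move=> _ /andP [r_gt0 r_le] n_gt0 N X ph.
have r_lt_k : r < k by lia.
split; first exact: count_far_phase_faults.
exact: FAR_cycI_bounds.
Qed.
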